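(* Let $V$ be a Gödel set in which $0$ is an isolated point. Then 1-satisfiability in $G_V$ of sentences of the monadic fragment is decidable.
   Context: A Gödel set is a closed set $V\subseteq[0,1]$ with $0,1\in V$. A $V$-interpretation assigns to each $k$-ary predicate a function $U^k\to V$ on a nonempty domain $U$ (constants as usual); $\bot\mapsto0$, $\wedge,\vee$ are $\min,\max$, $\mathcal I(A\supset B)=1$ if $\mathcal I(A)\le\mathcal I(B)$ and $=\mathcal I(B)$ otherwise, $\forall,\exists$ are $\inf,\sup$ over $U$. A sentence is 1-satisfiable in $G_V$ if some $V$-interpretation gives it value $1$. The monadic fragment consists of first-order sentences (not necessarily prenex) whose predicate symbols are all unary and which contain no function symbols of positive arity. *)

From HB Require Import structures.
From mathcomp Require Import all_boot all_order all_algebra.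
From mathcomp Require Import all_classical all_reals all_analysis.
Set Implicit Arguments. Unset Strict Implicit. Unset Printing Implicit Defensive.
Import Order.TTheory GRing.Theory Num.Theory.
Import numFieldNormedType.Exports.
Local Open Scope classical_set_scope.
Local Open Scope ring_scope.

Definition godel_set (R : realType) (V : set R) : Prop :=
  [/\ closed V, (forall x, V x -> 0 <= x <= 1), V 0 & V 1].

Definition zero_isolated (R : realType) (V : set R) : Prop :=
  exists2 eps : R, 0 < eps & forall x, V x -> `|x| < eps -> x = 0.

(* Predicate symbols are all unary (indexed by nat); the only terms   *)
(* are variables and constants (no function symbols of positive arity)*)
Inductive mterm : Type :=
| TVar of nat
| TConst of nat.

Inductive mform : Type :=
| FBot
| FPred of nat & mterm
| FAnd of mform & mform
| FOr of mform & mform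
| FImp of mform & mform
| FAll of mform                 (* binds de Bruijn index 0 *)
| FEx of mform.

Definition term_closed (k : nat) (t : mterm) : bool :=
  match t with TVar n => (n < k)%N | TConst _ => true end.

Fixpoint form_closed (k : nat) (A : mform) : bool :=
  match A with
  | FBot => true
  | FPred _ t => term_closed k t
  | FAnd A B | FOr A B | FImp A B => form_closed k A && form_closed k B
  | FAll A | FEx A => form_closed k.+1 A
  end.

Definition sentence (A : mform) : bool := form_closed 0 A.

Definition scons (U : Type) (u : U) (e : nat -> U) : nat -> U :=
  fun n => match n with O => u | S m => e m end.

Section Sem.
Variables (R : realType) (U : Type).
Variables (cst : nat -> U) (prd : nat -> U -> R).

Definition term_val (e : nat -> U) (t : mterm) : U :=
  match t with TVar n => e n | TConst c => cst c end.

Definition goedel_imp (a b : R) : R := if a <= b then 1 else b.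

Fixpoint fval (e : nat -> U) (A : mform) : R :=
  match A with
  | FBot => 0
  | FPred p t => prd p (term_val e t)
  | FAnd A B => Order.min (fval e A) (fval e B)
  | FOr A B => Order.max (fval e A) (fval e B)
  | FImp A B => goedel_imp (fval e A) (fval e B)
  | FAll A => inf (range (fun u => fval (scons u e) A))
  | FEx A => sup (range (fun u => fval (scons u e) A))
  end.
End Sem.

(* A is 1-satisfiable in G_V: some V-interpretation (nonempty domain U,
   constants interpreted in U, unary predicates U -> V) gives A value 1.
   For a sentence the value does not depend on the environment; we
   evaluate under the constant environment at an element of U. *)
Definition one_satisfiable (R : realType) (V : set R) (A : mform) : Prop :=
  exists (U : Type) (u0 : U) (cst : nat -> U) (prd : nat -> U -> R),
    (forall p u, V (prd p u)) /\ fval cst prd (fun _ => u0) A = 1.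

Inductive recfun : Type :=
| RZero
| RSucc
| RProj of nat
| RComp of recfun & list recfun
| RPrec of recfun & recfun
| RMin of recfun.

Inductive reval : recfun -> list nat -> nat -> Prop :=
| EvZero xs : reval RZero xs 0
| EvSucc x xs : reval RSucc (x :: xs) x.+1
| EvProj i xs : (i < size xs)%N -> reval (RProj i) xs (nth 0%N xs i)
| EvComp f gs xs ys y :
    revals gs xs ys -> reval f ys y -> reval (RComp f gs) xs y
| EvPrec0 f g xs y : reval f xs y -> reval (RPrec f g) (0%N :: xs) y
| EvPrecS f g n xs y z :
    reval (RPrec f g) (n :: xs) y -> reval g (n :: y :: xs) z ->
    reval (RPrec f g) (n.+1 :: xs) z
| EvMin f xs n :
    reval f (n :: xs) 0 ->
    (forall m, (m < n)%N -> exists k, reval f (m :: xs) k.+1) ->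
    reval (RMin f) xs n
with revals : list recfun -> list nat -> list nat -> Prop :=
| EvsNil xs : revals nil xs nil
| EvsCons g gs xs y ys :
    reval g xs y -> revals gs xs ys -> revals (g :: gs) xs (y :: ys).

Definition cpair (a b : nat) : nat := ((a + b) * (a + b).+1)./2 + b.

Definition code_term (t : mterm) : nat :=
  match t with TVar n => cpair 0 n | TConst c => cpair 1 c end.

Fixpoint code (A : mform) : nat :=
  match A with
  | FBot => cpair 0 0
  | FPred p t => cpair 1 (cpair p (code_term t))
  | FAnd A B => cpair 2 (cpair (code A) (code B))
  | FOr A B => cpair 3 (cpair (code A) (code B))
  | FImp A B => cpair 4 (cpair (code A) (code B))
  | FAll A => cpair 5 (code A)
  | FEx A => cpair 6 (code A)
  end.

Definition decidable_on_sentences (P : mform -> Prop) : Prop :=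
  exists f : recfun, forall A : mform, sentence A ->
    (P A -> reval f [:: code A] 1) /\ (~ P A -> reval f [:: code A] 0).

From Pilot Require Import Defs.
From HB Require Import structures.
From mathcomp Require Import all_boot all_order all_algebra.
From mathcomp Require Import all_classical all_reals all_analysis.
From mathcomp Require Import zify lra.
Set Implicit Arguments.
Unset Strict Implicit.
Unset Printing Implicit Defensive.
Import Order.TTheory GRing.Theory Num.Theory.
Import numFieldNormedType.Exports.
Local Open Scope classical_set_scope.

(* Since 0 is isolated in V, a truth value is nonzero iff it is at least some eps > 0, and
   v |-> (v <> 0) commutes with min, max, Goedel implication, inf and sup.  As 0 and 1 lie in
   V, a sentence is 1-satisfiable in G_V iff it is classically satisfiable.  A classical model
   of a monadic sentence whose symbols have indices at most x can be collapsed to the atom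
   types over P_0, ..., P_x, of which there are 2^(x+1).  Satisfiability thus becomes the
   bounded arithmetic statement that a set of types, types for the constants and a truth
   table obeying the Tarski conditions exist, and bounded arithmetic formulas are decided by
   primitive recursive functions. *)

(** * Partial recursive functions *)

Local Open Scope nat_scope.

Lemma reval_proj i xs y : i < size xs -> y = nth 0 xs i -> reval (RProj i) xs y.
Proof. by move=> ? ->; apply: EvProj. Qed.

Lemma reval_comp1 f g xs y z :
  reval g xs y -> reval f [:: y] z -> reval (RComp f [:: g]) xs z.
Proof. by move=> Hg Hf; apply: (EvComp (ys := [:: y])) => //; do !constructor. Qed.

Lemma reval_comp2 f g h xs y1 y2 z :
  reval g xs y1 -> reval h xs y2 -> reval f [:: y1; y2] z ->
  reval (RComp f [:: g; h]) xs z.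
Proof. by move=> Hg Hh Hf; apply: (EvComp (ys := [:: y1; y2])) => //; do !constructor. Qed.

Lemma reval_prec (F : nat -> nat) f g xs :
  reval f xs (F 0) -> (forall n, reval g [:: n, F n & xs] (F n.+1)) ->
  forall n, reval (RPrec f g) (n :: xs) (F n).
Proof. by move=> H0 HS; elim=> [|n IH]; [apply: EvPrec0|apply: EvPrecS IH _]. Qed.

Definition projs (j k : nat) : list recfun := map RProj (iota j k).

Lemma revals_projs xs ys : revals (projs (size xs) (size ys)) (xs ++ ys) ys.
Proof.
elim: ys xs => [|y ys IH] xs /=; first exact: EvsNil.
apply: EvsCons.
  by apply: reval_proj; rewrite ?size_cat ?nth_cat ?ltnn ?subnn //= addnS ltnS leq_addr.
by have := IH (rcons xs y); rewrite size_rcons cat_rcons.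
Qed.

Lemma revals_env xs : revals (projs 0 (size xs)) xs xs.
Proof. exact: (revals_projs [::]). Qed.

Fixpoint rconst (k : nat) : recfun :=
  if k is k'.+1 then RComp RSucc [:: rconst k'] else RZero.

Lemma reval_rconst k xs : reval (rconst k) xs k.
Proof.
by elim: k => [|k IH] /=; [exact: EvZero|apply: reval_comp1 IH _; apply: EvSucc].
Qed.

Definition rsucc (i : nat) : recfun := RComp RSucc [:: RProj i].

Lemma reval_rsucc i xs : i < size xs -> reval (rsucc i) xs (nth 0 xs i).+1.
Proof. by move=> ?; apply: reval_comp1 (EvSucc _ _); apply: EvProj. Qed.

Definition radd := RPrec (RProj 0) (rsucc 1).

Lemma reval_radd a b : reval radd [:: a; b] (a + b).
Proof. by apply: (reval_prec (F := addn^~ b)) => [|n]; [exact: EvProj|exact: reval_rsucc]. Qed.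

Definition rmul := RPrec RZero (RComp radd [:: RProj 1; RProj 2]).

Lemma reval_rmul a b : reval rmul [:: a; b] (a * b).
Proof.
apply: (reval_prec (F := muln^~ b)) => [|n]; first exact: EvZero.
by apply: reval_comp2; [exact: EvProj|exact: EvProj|rewrite mulSn addnC; exact: reval_radd].
Qed.

Definition rexp := RPrec (rconst 1) (RComp rmul [:: RProj 1; RProj 2]).

Lemma reval_rexp n a : reval rexp [:: n; a] (a ^ n).
Proof.
apply: (reval_prec (F := expn a)) => [|m]; first exact: reval_rconst.
by apply: reval_comp2; [exact: EvProj|exact: EvProj|rewrite expnSr; exact: reval_rmul].
Qed.

Definition rpred := RPrec RZero (RProj 0).

Lemma reval_rpred n : reval rpred [:: n] n.-1.
Proof. by apply: (reval_prec (F := predn)) => [|m]; [exact: EvZero|exact: EvProj]. Qed.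

Definition rsubr := RPrec (RProj 0) (RComp rpred [:: RProj 1]).

Lemma reval_rsubr n x : reval rsubr [:: n; x] (x - n).
Proof.
apply: (reval_prec (F := subn x)) => [|m]; first by apply: reval_proj; rewrite ?subn0.
by apply: reval_comp1; [exact: EvProj|rewrite subnS; exact: reval_rpred].
Qed.

Definition rsign := RPrec RZero (rconst 1).

Lemma reval_rsign n : reval rsign [:: n] (0 < n).
Proof.
by apply: (reval_prec (F := fun n => 0 < n)) => [|m]; [exact: EvZero|exact: reval_rconst].
Qed.

Definition riszero := RPrec (rconst 1) RZero.

Lemma reval_riszero n : reval riszero [:: n] (n == 0).
Proof.
by apply: (reval_prec (F := fun n => n == 0)) => [|m]; [exact: reval_rconst|exact: EvZero].
Qed.

Definition rnot f := RComp riszero [:: f].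
Definition rand f g := RComp rmul [:: f; g].
Definition ror f g := RComp rsign [:: RComp radd [:: f; g]].
Definition rimp f g := ror (rnot f) g.

Section BooleanCombinators.
Variables (f g : recfun) (xs : seq nat) (b c : bool).
Hypotheses (Hf : reval f xs b) (Hg : reval g xs c).

Lemma reval_rnot : reval (rnot f) xs (~~ b).
Proof. by apply: reval_comp1 Hf _; case: b (reval_riszero b). Qed.

Lemma reval_rand : reval (rand f g) xs (b && c).
Proof. by apply: reval_comp2 Hf Hg _; case: b c (reval_rmul b c) => -[]. Qed.

Lemma reval_ror : reval (ror f g) xs (b || c).
Proof.
apply: reval_comp1 (reval_comp2 Hf Hg (reval_radd _ _)) _.
by case: b c (reval_rsign (b + c)) => -[].
Qed.

End BooleanCombinators.

Lemma reval_rimp f g xs (b c : bool) :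
  reval f xs b -> reval g xs c -> reval (rimp f g) xs (b ==> c).
Proof. by move=> Hf Hg; rewrite implybE; exact: reval_ror (reval_rnot Hf) Hg. Qed.

Definition req := RComp riszero [:: RComp radd [:: RComp rsubr [:: RProj 1; RProj 0]; rsubr]].

Lemma reval_req a b : reval req [:: a; b] (a == b).
Proof.
have -> : (a == b) = ((a - b) + (b - a) == 0) by rewrite addn_eq0 !subn_eq0 -eqn_leq.
apply: reval_comp1 _ (reval_riszero _).
apply: reval_comp2 _ (reval_rsubr _ _) (reval_radd _ _).
by apply: reval_comp2 _ _ (reval_rsubr _ _); exact: EvProj.
Qed.

Lemma modnS_neq n d : n.+1 %% d = (n %% d).+1 * ((n %% d).+1 != d).
Proof.
case: (posnP d) => [->|d_gt0]; first by rewrite !modn0 muln1.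
rewrite modnS /dvdn -addn1 -modnDml addn1.
have := ltn_pmod n d_gt0; rewrite leq_eqVlt => /orP[/eqP->|lt].
  by rewrite modnn /= eqxx muln0.
by rewrite modn_small // (ltn_eqF lt) muln1.
Qed.

Definition rmod :=
  RPrec RZero (RComp rmul [:: rsucc 1; rnot (RComp req [:: rsucc 1; RProj 2])]).

Lemma reval_rmod n d : reval rmod [:: n; d] (n %% d).
Proof.
apply: (reval_prec (F := modn^~ d)) => [|m]; first by rewrite mod0n; exact: EvZero.
have Hs : reval (rsucc 1) [:: m, m %% d & [:: d]] (m %% d).+1 by exact: reval_rsucc.
apply: reval_comp2 Hs (reval_rnot (reval_comp2 Hs _ (reval_req _ _))) _; first exact: EvProj.
by rewrite modnS_neq; exact: reval_rmul.
Qed.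

Definition rdiv :=
  RPrec RZero (RComp radd [:: RProj 1; RComp riszero [:: RComp rmod [:: rsucc 0; RProj 2]]]).

Lemma reval_rdiv n d : reval rdiv [:: n; d] (n %/ d).
Proof.
apply: (reval_prec (F := divn^~ d)) => [|m]; first by rewrite div0n; exact: EvZero.
have Hd : reval (RComp riszero [:: RComp rmod [:: rsucc 0; RProj 2]]) [:: m, m %/ d & [:: d]]
    (d %| m.+1).
  apply: reval_comp1 _ (reval_riszero _).
  by apply: reval_comp2 (reval_rsucc _) _ (reval_rmod _ _); [done|exact: EvProj].
apply: reval_comp2 _ Hd _; first exact: EvProj.
case: (posnP d) => [->|d_gt0]; last by rewrite divnS // addnC; exact: reval_radd.
by rewrite !divn0 dvd0n; exact: reval_radd.
Qed.

Definition rbex (k : nat) (c : recfun) : recfun :=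
  RPrec RZero (ror (RProj 1) (RComp c (RProj 0 :: projs 2 k))).

Lemma asbool_exists_ltS n (P : nat -> Prop) :
  `[< exists y, y < n.+1 /\ P y >] = `[< exists y, y < n /\ P y >] || `[< P n >].
Proof.
rewrite -asbool_or; apply: asbool_equiv_eq; split.
  case=> y [+ Py]; rewrite ltnS leq_eqVlt => /orP[/eqP<-|lt]; [by right|by left; exists y].
by case=> [[y [lt Py]]|Pn]; [exists y; split; first exact: ltnW|exists n].
Qed.

Lemma reval_rbex c (P : nat -> Prop) env :
  (forall y, reval c (y :: env) `[< P y >]) ->
  forall n, reval (rbex (size env) c) (n :: env) `[< exists y, y < n /\ P y >].
Proof.
move=> Hc; apply: (reval_prec (F := fun n => nat_of_bool `[< exists y, y < n /\ P y >])).
  by rewrite asboolF; [exact: EvZero|move=> [y []]].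
move=> n; rewrite asbool_exists_ltS; apply: reval_ror; first exact: EvProj.
apply: EvComp (Hc n); apply: EvsCons; first exact: EvProj.
exact: (revals_projs [:: n; _]).
Qed.

Definition rbexists k (bound c : recfun) := RComp (rbex k c) (bound :: projs 0 k).
Definition rball k (bound c : recfun) := rnot (rbexists k bound (rnot c)).

Section BoundedQuantifiers.
Variables (bound : recfun) (env : seq nat) (n : nat).
Hypothesis Hbound : reval bound env n.

Lemma reval_rbexists c (P : nat -> Prop) :
  (forall y, reval c (y :: env) `[< P y >]) ->
  reval (rbexists (size env) bound c) env `[< exists y, y < n /\ P y >].
Proof.
move=> Hc; apply: EvComp (reval_rbex Hc n).
by apply: EvsCons Hbound _; exact: revals_env.
Qed.

Lemma reval_rball c (P : nat -> Prop) :
  (forall y, reval c (y :: env) `[< P y >]) ->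
  reval (rball (size env) bound c) env `[< forall y, y < n -> P y >].
Proof.
move=> Hc; have -> : `[< forall y, y < n -> P y >] = ~~ `[< exists y, y < n /\ ~ P y >].
  rewrite -asbool_neg; apply: asbool_equiv_eq; split=> [H [y [lt nPy]]|H y lt].
    exact: nPy (H y lt).
  by apply: contrapT => nPy; apply: H; exists y.
apply: reval_rnot; apply: reval_rbexists => y.
by rewrite asbool_neg; exact: reval_rnot (Hc y).
Qed.

End BoundedQuantifiers.

(** * Cantor pairing and bounded arithmetic formulas *)

Lemma cpair_double a b : (cpair a b).*2 = (a + b) * (a + b).+1 + b.*2.
Proof. by rewrite /cpair doubleD even_halfK // oddM oddS; case: odd. Qed.

Lemma cpairE a b : cpair a b = (a + b) * (a + b).+1 %/ 2 + b.
Proof. by rewrite /cpair divn2. Qed.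

Lemma leq_cpairl a b : a <= cpair a b.
Proof. have := cpair_double a b; rewrite -!muln2 => H; nia. Qed.

Lemma leq_cpairr a b : b <= cpair a b.
Proof. have := cpair_double a b; rewrite -!muln2 => H; nia. Qed.

Lemma ltn_cpairr a b : 0 < a -> b < cpair a b.
Proof. have := cpair_double a b; rewrite -!muln2 => H; nia. Qed.

Lemma leq_cpair2l t a b : a <= cpair t (cpair a b).
Proof. exact: leq_trans (leq_cpairl _ _) (leq_cpairr _ _). Qed.

Lemma leq_cpair2r t a b : b <= cpair t (cpair a b).
Proof. exact: leq_trans (leq_cpairr _ _) (leq_cpairr _ _). Qed.

Lemma cpair_inj a b a' b' : cpair a b = cpair a' b' -> a = a' /\ b = b'.
Proof.
move=> E; have := cpair_double a b; have := cpair_double a' b'; rewrite E.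
rewrite -!muln2 => H1 H2.
have Hs : a + b = a' + b'.
  apply/eqP; rewrite eqn_leq; apply/andP; split; rewrite leqNgt; apply/negP => lt.
    have : (a' + b').+1 * (a' + b').+1 <= (a + b) * (a + b).+1 by rewrite leq_mul // ltnS ltnW.
    nia.
  have : (a + b).+1 * (a + b).+1 <= (a' + b') * (a' + b').+1 by rewrite leq_mul // ltnS ltnW.
  nia.
move: H1 H2; rewrite Hs => H1 H2; have Hb : b = b' by nia.
by split; lia.
Qed.

Inductive aexp : Type :=
| AVar of nat | ACst of nat
| AAdd of aexp & aexp | AMul of aexp & aexp | AExp of aexp & aexp
| ADiv of aexp & aexp | AMod of aexp & aexp | APair of aexp & aexp.

Fixpoint aeval (env : seq nat) (a : aexp) : nat :=
  match a with
  | AVar i => nth 0 env i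
  | ACst k => k
  | AAdd a b => aeval env a + aeval env b
  | AMul a b => aeval env a * aeval env b
  | AExp a b => aeval env a ^ aeval env b
  | ADiv a b => aeval env a %/ aeval env b
  | AMod a b => aeval env a %% aeval env b
  | APair a b => cpair (aeval env a) (aeval env b)
  end.

Fixpoint awf (k : nat) (a : aexp) : bool :=
  match a with
  | AVar i => i < k
  | ACst _ => true
  | AAdd a b | AMul a b | AExp a b | ADiv a b | AMod a b | APair a b => awf k a && awf k b
  end.

Inductive bfm : Type :=
| BEq of aexp & aexp
| BNot of bfm | BAnd of bfm & bfm | BOr of bfm & bfm | BImp of bfm & bfm
| BEx of aexp & bfm | BAll of aexp & bfm | BSplit of aexp & bfm.

Fixpoint holds (env : seq nat) (f : bfm) : Prop :=
  match f with
  | BEq a b => aeval env a = aeval env b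
  | BNot f => ~ holds env f
  | BAnd f g => holds env f /\ holds env g
  | BOr f g => holds env f \/ holds env g
  | BImp f g => holds env f -> holds env g
  | BEx t f => exists y, y < aeval env t /\ holds (y :: env) f
  | BAll t f => forall y, y < aeval env t -> holds (y :: env) f
  | BSplit c f => forall a b, aeval env c = cpair a b -> holds [:: b, a & env] f
  end.

Fixpoint bwf (k : nat) (f : bfm) : bool :=
  match f with
  | BEq a b => awf k a && awf k b
  | BNot f => bwf k f
  | BAnd f g | BOr f g | BImp f g => bwf k f && bwf k g
  | BEx t f | BAll t f => awf k t && bwf k.+1 f
  | BSplit c f => awf k c && bwf k.+2 f
  end.

Fixpoint compA (a : aexp) : recfun :=
  match a with
  | AVar i => RProj i
  | ACst k => rconst k
  | AAdd a b => RComp radd [:: compA a; compA b]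
  | AMul a b => RComp rmul [:: compA a; compA b]
  | AExp a b => RComp rexp [:: compA b; compA a]
  | ADiv a b => RComp rdiv [:: compA a; compA b]
  | AMod a b => RComp rmod [:: compA a; compA b]
  | APair a b =>
      let s := RComp radd [:: compA a; compA b] in
      RComp radd [:: RComp rdiv [:: RComp rmul [:: s; RComp RSucc [:: s]]; rconst 2]; compA b]
  end.

Lemma reval_compA env a : awf (size env) a -> reval (compA a) env (aeval env a).
Proof.
elim: a => [i|k|a IHa b IHb|a IHa b IHb|a IHa b IHb|a IHa b IHb|a IHa b IHb|a IHa b IHb] /=;
  try case/andP=> /IHa Ha /IHb Hb.
- exact: EvProj.
- by move=> _; exact: reval_rconst.
- exact: reval_comp2 Ha Hb (reval_radd _ _).
- exact: reval_comp2 Ha Hb (reval_rmul _ _).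
- exact: reval_comp2 Hb Ha (reval_rexp _ _).
- exact: reval_comp2 Ha Hb (reval_rdiv _ _).
- exact: reval_comp2 Ha Hb (reval_rmod _ _).
have Hs := reval_comp2 Ha Hb (reval_radd _ _).
rewrite cpairE; apply: reval_comp2 _ Hb (reval_radd _ _).
apply: reval_comp2 _ (reval_rconst 2 _) (reval_rdiv _ _).
exact: reval_comp2 Hs (reval_comp1 Hs (EvSucc _ _)) (reval_rmul _ _).
Qed.

Definition compA_succ (a : aexp) : recfun := compA (AAdd a (ACst 1)).

Fixpoint compB (k : nat) (f : bfm) : recfun :=
  match f with
  | BEq a b => RComp req [:: compA a; compA b]
  | BNot f => rnot (compB k f)
  | BAnd f g => rand (compB k f) (compB k g)
  | BOr f g => ror (compB k f) (compB k g)
  | BImp f g => rimp (compB k f) (compB k g)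
  | BEx t f => rbexists k (compA t) (compB k.+1 f)
  | BAll t f => rball k (compA t) (compB k.+1 f)
  | BSplit c f =>
      rball k (compA_succ c) (rball k.+1 (RComp (compA_succ c) (projs 1 k))
        (rimp (RComp req [:: RComp (compA c) (projs 2 k); compA (APair (AVar 1) (AVar 0))])
              (compB k.+2 f)))
  end.

Lemma split_bounded (c : nat) (P : nat -> nat -> Prop) :
  (forall a, a < c + 1 -> forall b, b < c + 1 -> c = cpair a b -> P a b) <->
  (forall a b, c = cpair a b -> P a b).
Proof.
split=> H a; last by move=> _ b _; exact: H.
by move=> b Ec; apply: H => //; rewrite addn1 ltnS Ec ?leq_cpairl ?leq_cpairr.
Qed.

Lemma asbool_eq (T : eqType) (x y : T) : `[< x = y >] = (x == y).
Proof. exact: asbool_equiv_eqP eqP _. Qed.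

Theorem reval_compB env f :
  bwf (size env) f -> reval (compB (size env) f) env `[< holds env f >].
Proof.
elim: f env => [a b|f IH|f IHf g IHg|f IHf g IHg|f IHf g IHg|t f IH|t f IH|c f IH] env /=.
- case/andP=> /reval_compA Ha /reval_compA Hb.
  by rewrite asbool_eq; exact: reval_comp2 Ha Hb (reval_req _ _).
- by move=> /IH Hf; rewrite asbool_neg; exact: reval_rnot.
- by case/andP=> /IHf Hf /IHg Hg; rewrite asbool_and; exact: reval_rand.
- by case/andP=> /IHf Hf /IHg Hg; rewrite asbool_or; exact: reval_ror.
- by case/andP=> /IHf Hf /IHg Hg; rewrite asbool_imply; exact: reval_rimp.
- case/andP=> /reval_compA Ht Hf.
  by apply: (reval_rbexists (P := fun y => holds (y :: env) f) Ht) => y; exact: (IH (y :: env)).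
- case/andP=> /reval_compA Ht Hf.
  by apply: (reval_rball (P := fun y => holds (y :: env) f) Ht) => y; exact: (IH (y :: env)).
case/andP=> Hc Hf; set P := fun a b => holds [:: b, a & env] f.
have Hc1 : reval (compA_succ c) env (aeval env c + 1) by apply: reval_compA; rewrite /= Hc.
rewrite -(asbool_equiv_eq (split_bounded (aeval env c) P)).
apply: (reval_rball (P := fun a =>
  forall b, b < aeval env c + 1 -> aeval env c = cpair a b -> P a b) Hc1) => a.
have Hc1' := EvComp (revals_projs [:: a] _) Hc1.
apply: (reval_rball (P := fun b => aeval env c = cpair a b -> P a b) Hc1') => b.
rewrite asbool_imply asbool_eq; apply: reval_rimp; last exact: (IH [:: b, a & env]).
apply: reval_comp2 (EvComp (revals_projs [:: b; a] _) (reval_compA Hc)) _ (reval_req _ _).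
exact: (reval_compA (env := [:: b, a & env]) (a := APair (AVar 1) (AVar 0))).
Qed.


(** * Classical semantics and Goedel truth values *)

Section MonadicSemantics.
Variables (U : Type) (dom : U -> Prop) (cst : nat -> U) (atom : nat -> U -> Prop).

Fixpoint msat (e : nat -> U) (A : mform) : Prop :=
  match A with
  | FBot => False
  | FPred p t => atom p (term_val cst e t)
  | FAnd A B => msat e A /\ msat e B
  | FOr A B => msat e A \/ msat e B
  | FImp A B => msat e A -> msat e B
  | FAll A => forall u, dom u -> msat (scons u e) A
  | FEx A => exists u, dom u /\ msat (scons u e) A
  end.

Lemma msat_env A k : form_closed k A ->
  forall e e', (forall n, n < k -> e n = e' n) -> msat e A <-> msat e' A.
Proof.
elim: A k => [|p t|A IA B IB|A IA B IB|A IA B IB|A IA|A IA] k //= Hc e e' He;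
  try by case/andP: Hc => /IA HA /IB HB; rewrite (HA e e') ?(HB e e').
- by case: t Hc => [n|c] //= Hn; rewrite He.
- have Hs u : msat (scons u e) A <-> msat (scons u e') A.
    by apply: (IA _ Hc) => -[|n] //= /He.
  by split=> H u Hu; apply/Hs/H.
have Hs u : msat (scons u e) A <-> msat (scons u e') A.
  by apply: (IA _ Hc) => -[|n] //= /He.
by split=> -[u [Hu /Hs H]]; exists u.
Qed.

End MonadicSemantics.

Fixpoint qdepth (A : mform) : nat :=
  match A with
  | FBot | FPred _ _ => 0
  | FAnd A B | FOr A B | FImp A B => maxn (qdepth A) (qdepth B)
  | FAll A | FEx A => (qdepth A).+1
  end.

Fixpoint bounded (x : nat) (A : mform) : bool :=
  match A with
  | FBot => true
  | FPred p (TVar _) => p <= x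
  | FPred p (TConst c) => (p <= x) && (c <= x)
  | FAnd A B | FOr A B | FImp A B => bounded x A && bounded x B
  | FAll A | FEx A => bounded x A
  end.

Lemma bounded_code A : bounded (Defs.code A) A.
Proof.
have le1 a b x : cpair a b <= x -> b <= x by exact/leq_trans/leq_cpairr.
have le2 a b c x : cpair a (cpair b c) <= x -> (b <= x) && (c <= x).
  by move/le1=> H; rewrite (leq_trans (leq_cpairl _ _) H) (le1 _ _ _ H).
suff H x : Defs.code A <= x -> bounded x A by exact: H.
elim: A x => [|p [n|c]|A IA B IB|A IA B IB|A IA B IB|A IA|A IA] x //=;
  try by move=> /le2 /andP[/IA-> /IB->].
- by case/le2/andP.
- by case/le2/andP=> -> /le1.
- by move/le1/IA.
by move/le1/IA.
Qed.

Lemma qdepth_code A : qdepth A <= Defs.code A.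
Proof.
elim: A => [|p t|A IA B IB|A IA B IB|A IA B IB|A IA|A IA] //=;
  try by rewrite geq_max (leq_trans IA (leq_cpair2l _ _ _)) (leq_trans IB (leq_cpair2r _ _ _)).
- by apply: leq_ltn_trans IA _; rewrite ltn_cpairr.
by apply: leq_ltn_trans IA _; rewrite ltn_cpairr.
Qed.

Lemma msat_hom U1 U2 (dom1 : U1 -> Prop) (dom2 : U2 -> Prop) cst1 cst2
    (atom1 : nat -> U1 -> Prop) (atom2 : nat -> U2 -> Prop) (h : U1 -> U2) x :
  (forall u, dom1 u -> dom2 (h u)) -> (forall v, dom2 v -> exists2 u, dom1 u & h u = v) ->
  (forall p u, p <= x -> atom1 p u <-> atom2 p (h u)) ->
  (forall c, c <= x -> h (cst1 c) = cst2 c) ->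
  forall A, bounded x A -> forall e,
    msat dom1 cst1 atom1 e A <-> msat dom2 cst2 atom2 (h \o e) A.
Proof.
move=> Hdom Hsurj Hatom Hcst.
have Escons e u : h \o scons u e = scons (h u) (h \o e) by apply: funext => -[].
elim=> [|p [n|c]|A IA B IB|A IA B IB|A IA B IB|A IA|A IA] //= Hb e;
  try by case/andP: Hb => /IA HA /IB HB; rewrite HA HB.
- exact: Hatom.
- by case/andP: Hb => Hp Hc; rewrite Hatom // Hcst.
- split=> H v; last by move=> Hu; rewrite IA // Escons; apply/H/Hdom.
  by case/Hsurj=> u Hu <-; rewrite -Escons -IA //; exact: H.
split=> -[u [Hu H]]; first by exists (h u); rewrite -Escons -IA //; split=> //; exact: Hdom.
by have [w Hw Ew] := Hsurj _ Hu; exists w; split=> //; rewrite IA // Escons Ew.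
Qed.

Lemma eq_msat U dom (cst : nat -> U) (atom1 atom2 : nat -> U -> Prop) :
  (forall p u, atom1 p u <-> atom2 p u) ->
  forall A e, msat dom cst atom1 e A <-> msat dom cst atom2 e A.
Proof.
move=> Hatom A e; apply: (msat_hom (h := id) _ _ _ _ (bounded_code A)) => //.
by move=> v dv; exists v.
Qed.

Section GapValues.
Local Open Scope ring_scope.
Variables (R : realType) (eps : R).
Hypotheses (eps_gt0 : 0 < eps) (eps_le1 : eps <= 1).

(* The possible truth values when [V] does not meet [(0, eps)]. *)
Definition gap (v : R) : Prop := v = 0 \/ eps <= v <= 1.

Lemma gap_ge0 v : gap v -> 0 <= v.
Proof. by case=> [->|/andP[+ _]] //; apply: le_trans; exact: ltW. Qed.

Lemma gap_min a b : gap a -> gap b ->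
  gap (Order.min a b) /\ (Order.min a b <> 0 <-> a <> 0 /\ b <> 0).
Proof.
move=> Ha Hb; have := gap_ge0 Ha; have := gap_ge0 Hb.
by rewrite minEle; case: ifP => ab; split=> //; split=> [|[]] //; lra.
Qed.

Lemma gap_max a b : gap a -> gap b ->
  gap (Order.max a b) /\ (Order.max a b <> 0 <-> a <> 0 \/ b <> 0).
Proof.
move=> Ha Hb; have := gap_ge0 Ha; have := gap_ge0 Hb.
by rewrite maxEle; case: ifP => ab; split=> //; split=> [|[]]; lra.
Qed.

Lemma gap_imp a b : gap a -> gap b ->
  gap (goedel_imp a b) /\ (goedel_imp a b <> 0 <-> (a <> 0 -> b <> 0)).
Proof.
move=> Ha Hb; have := gap_ge0 Ha; have := gap_ge0 Hb; rewrite /goedel_imp.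
by case: ifP => ab; [split; [right; rewrite eps_le1 lexx|split=> //; lra]|split=> //; lra].
Qed.

Section Quantifiers.
Variables (U : Type) (u0 : U) (f : U -> R).
Hypothesis gap_f : forall u, gap (f u).

Let nonempty : range f !=set0. Proof. by exists (f u0), u0. Qed.

Lemma gap_inf : gap (inf (range f)) /\ (inf (range f) <> 0 <-> forall u, f u <> 0).
Proof.
have lb0 : lbound (range f) 0 by move=> _ [u _ <-]; exact: gap_ge0.
have inf_le u : inf (range f) <= f u by apply: ge_inf; [exists 0|exists u].
have inf_ge0 : 0 <= inf (range f) by exact: lb_le_inf nonempty lb0.
have [[u fu0]|all_pos] := pselect (exists u, f u = 0).
  have -> : inf (range f) = 0 by apply/eqP; rewrite eq_le inf_ge0 -fu0 inf_le.
  by split; [left|split=> // /(_ u)].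
have ge_eps u : eps <= f u <= 1.
  by case: (gap_f u) => // fu0; case: all_pos; exists u.
have ge : eps <= inf (range f).
  by apply: lb_le_inf nonempty _ => _ [u _ <-]; case/andP: (ge_eps u).
have le1 : inf (range f) <= 1 by apply: le_trans (inf_le u0) _; case/andP: (ge_eps u0).
split; first by right; rewrite ge le1.
split=> [_ u fu0|_ inf0]; first by apply: all_pos; exists u.
by move: (lt_le_trans eps_gt0 ge); rewrite inf0 ltxx.
Qed.

Lemma gap_sup : gap (sup (range f)) /\ (sup (range f) <> 0 <-> exists u, f u <> 0).
Proof.
have ub1 : ubound (range f) 1 by move=> _ [u _ <-]; case: (gap_f u) => [->|/andP[]].
have le_sup u : f u <= sup (range f) by apply: ub_le_sup; [exists 1|exists u].
have sup_le1 : sup (range f) <= 1 by exact: ge_sup nonempty ub1.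
have [[u fu_neq0]|all0] := pselect (exists u, f u <> 0).
  have ge : eps <= f u by case: (gap_f u) => // /andP[].
  have eps_le := le_trans ge (le_sup u).
  split; first by right; rewrite eps_le.
  by split=> [_|_ sup0]; [exists u|move: (lt_le_trans eps_gt0 eps_le); rewrite sup0 ltxx].
have f0 u : f u = 0 by apply: contrapT => fu; apply: all0; exists u.
have -> : sup (range f) = 0.
  apply/eqP; rewrite eq_le -(f0 u0) le_sup andbT.
  by apply: ge_sup nonempty _ => _ [u _ <-]; rewrite !f0.
by split; [left|split=> // -[u]; rewrite f0].
Qed.

End Quantifiers.

Lemma fval_gap U (u0 : U) cst (prd : nat -> U -> R) :
  (forall p u, gap (prd p u)) -> forall A e,
  gap (fval cst prd e A) /\
  (fval cst prd e A <> 0 <-> msat (fun _ => True) cst (fun p u => prd p u <> 0) e A).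
Proof.
move=> Hprd; elim=> [|p t|A IA B IB|A IA B IB|A IA B IB|A IA|A IA] e /=.
- by split; [left|].
- by split; [exact: Hprd|].
- have [[gA EA] [gB EB]] := (IA e, IB e); have [? ->] := gap_min gA gB.
  by rewrite EA EB.
- have [[gA EA] [gB EB]] := (IA e, IB e); have [? ->] := gap_max gA gB.
  by rewrite EA EB.
- have [[gA EA] [gB EB]] := (IA e, IB e); have [? ->] := gap_imp gA gB.
  by rewrite EA EB.
- have [? ->] := gap_inf u0 (fun u => proj1 (IA (scons u e))).
  by split=> //; split=> H u => [_|]; apply/(proj2 (IA _)); exact: H.
have [? ->] := gap_sup u0 (fun u => proj1 (IA (scons u e))).
by split=> //; split=> -[u Hu]; exists u;
  [split=> //; exact/(proj2 (IA _))|apply/(proj2 (IA _)); exact: (proj2 Hu)].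
Qed.

End GapValues.

Definition classically_satisfiable (A : mform) : Prop :=
  exists (U : Type) (u0 : U) (cst : nat -> U) (atom : nat -> U -> Prop),
    msat (fun _ => True) cst atom (fun _ => u0) A.

Local Open Scope ring_scope.

Lemma one_satisfiable_classical (R : realType) (V : set R) A :
  godel_set V -> zero_isolated V -> one_satisfiable V A <-> classically_satisfiable A.
Proof.
move=> [_ V01 V0 V1] [eps eps_gt0 isolated]; split.
  move=> [U [u0 [cst [prd [Vprd val1]]]]].
  exists U, u0, cst, (fun p u => prd p u <> 0).
  have e_gt0 : 0 < Order.min eps 1 by rewrite lt_min eps_gt0 ltr01.
  have e_le1 : Order.min eps 1 <= 1 by rewrite ge_min lexx orbT.
  have gap_prd (p : nat) (u : U) : gap (Order.min eps 1) (prd p u).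
    have /andP[ge0 le1] := V01 _ (Vprd p u).
    have [le|lt] := lerP eps (prd p u); last by left; apply: isolated; rewrite ?ger0_norm.
    by right; rewrite le1 andbT ge_min le.
  have [_ <-] := fval_gap e_gt0 e_le1 u0 cst gap_prd A (fun _ => u0).
  by rewrite val1; exact/eqP/oner_neq0.
move=> [U [u0 [cst [atom Hsat]]]].
pose prd p u : R := if `[< atom p u >] then 1 else 0.
have gap_prd (p : nat) (u : U) : gap 1 (prd p u).
  by rewrite /prd; case: asboolP => _; [right; rewrite lexx|left].
exists U, u0, cst, prd; split=> [p u|]; first by rewrite /prd; case: asboolP.
have [+ Hval] := fval_gap ltr01 (lexx 1) u0 cst gap_prd A (fun _ => u0).
case=> [val0|/andP[val_ge1 val_le1]]; last by apply/eqP; rewrite eq_le val_le1 val_ge1.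
have : msat (fun _ => True) cst (fun p u => prd p u <> 0) (fun _ => u0) A.
  apply/(eq_msat _ _ (atom1 := atom)) => // p u.
  by rewrite /prd; case: asboolP => Hp; split=> // _; exact/eqP/oner_neq0.
by move/Hval; rewrite val0.
Qed.

Local Open Scope nat_scope.

(** * Models on atom types *)

Definition digit (b X i : nat) : nat := X %/ b ^ i %% b.

Section Digits.
Variable b : nat.
Hypothesis b_gt0 : 0 < b.

Lemma digit_lt X i : digit b X i < b.
Proof. exact: ltn_pmod. Qed.

Lemma digit0 i : digit b 0 i = 0.
Proof. by rewrite /digit div0n mod0n. Qed.

Lemma digit_addMr X q i j : i < j -> digit b (X + q * b ^ j) i = digit b X i.
Proof.
move=> ij; have E : b ^ j = (b ^ (j - i).-1 * b) * b ^ i.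
  by rewrite -expnSr prednK ?subn_gt0 // -expnD subnK // ltnW.
by rewrite /digit E mulnA divnDMl ?expn_gt0 ?b_gt0 // mulnA addnC modnMDl.
Qed.

Lemma digit_top X q j : X < b ^ j -> q < b -> digit b (X + q * b ^ j) j = q.
Proof.
by move=> Xj qb; rewrite /digit divnDMl ?expn_gt0 ?b_gt0 // divn_small // add0n modn_small.
Qed.

Lemma digit_modX X x n : n < x -> digit b (X %% b ^ x) n = digit b X n.
Proof. by move=> nx; rewrite {2}(divn_eq X (b ^ x)) addnC digit_addMr. Qed.

Lemma digit_small X n : X < b ^ n -> digit b X n = 0.
Proof. by move=> H; rewrite /digit divn_small // mod0n. Qed.

Lemma digit_cons0 u X : u < b -> digit b (u + b * X) 0 = u.
Proof. by move=> ub; rewrite /digit expn0 divn1 mulnC addnC modnMDl modn_small. Qed.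

Lemma digit_consS u X n : u < b -> digit b (u + b * X) n.+1 = digit b X n.
Proof.
by move=> ub; rewrite /digit expnS divnMA [b * X]mulnC divnDMl // (divn_small ub) add0n.
Qed.

Definition undigits (L : nat) (f : nat -> nat) : nat := \sum_(i < L) f i * b ^ i.

Lemma undigitsP L f : (forall i, i < L -> f i < b) ->
  undigits L f < b ^ L /\ forall i, i < L -> digit b (undigits L f) i = f i.
Proof.
elim: L => [|L IH] Hf; first by rewrite /undigits big_ord0 expn0.
have [IH1 IH2] := IH (fun i Hi => Hf i (ltnW Hi)).
rewrite /undigits big_ord_recr /= -/(undigits L f); split.
  apply: (@leq_trans (b ^ L + f L * b ^ L)); first by rewrite ltn_add2r.
  by rewrite -mulSn expnS leq_mul // Hf.
move=> i; rewrite ltnS leq_eqVlt => /orP[/eqP->|Hi]; first by rewrite digit_top // Hf.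
by rewrite digit_addMr // IH2.
Qed.

End Digits.

(* An element of a small model is an atom type: the set of [p <= x] with [P_p] true at it,
   as an [x+1]-bit number.  The domain [S] is a set of such types (bit [u] of [S]), the
   constants are the base-[ntypes x] digits of [Cst], and environments of length [x] are
   the base-[ntypes x] digits of a number below [nenvs x]. *)
Definition ntypes (x : nat) : nat := 2 ^ (x + 1).
Definition nenvs (x : nat) : nat := ntypes x ^ x.

Lemma ntypes_gt0 x : 0 < ntypes x. Proof. exact: expn_gt0. Qed.
Lemma nenvs_gt0 x : 0 < nenvs x. Proof. by rewrite expn_gt0 ntypes_gt0. Qed.

Definition in_dom (x S u : nat) : Prop := u < ntypes x /\ digit 2 S u = 1.
Definition cst_of (x Cst c : nat) : nat := digit (ntypes x) Cst c.
Definition atom_of (p u : nat) : Prop := digit 2 u p = 1.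
Definition env_of (x e n : nat) : nat := digit (ntypes x) e n.

Definition small_satisfiable (x : nat) (A : mform) : Prop :=
  exists S Cst, [/\ S < 2 ^ ntypes x, Cst < ntypes x ^ (x + 1), exists u, in_dom x S u,
    forall c, c < x + 1 -> digit 2 S (cst_of x Cst c) = 1 &
    msat (in_dom x S) (cst_of x Cst) atom_of (fun _ => 0) A].

Lemma bit_asbool (P : Prop) : (nat_of_bool `[< P >] = 1) <-> P.
Proof. by case: asboolP. Qed.

Lemma small_satisfiable_of_model A : sentence A ->
  classically_satisfiable A -> small_satisfiable (Defs.code A) A.
Proof.
move=> sA [U [u0 [cst [atom Hsat]]]]; set x := Defs.code A.
pose tau u := undigits 2 (x + 1) (fun p => `[< atom p u >]).
have tauP u : tau u < ntypes x /\ forall p, p < x + 1 -> digit 2 (tau u) p = `[< atom p u >].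
  exact: (@undigitsP 2 isT (x + 1) _ (fun _ _ => leq_b1 _)).
pose S := undigits 2 (ntypes x) (fun v => `[< exists u, tau u = v >]).
have [S_lt S_bit] := @undigitsP 2 isT (ntypes x) (fun v => `[< exists u, tau u = v >])
  (fun _ _ => leq_b1 _).
pose Cst := undigits (ntypes x) (x + 1) (fun c => tau (cst c)).
have [Cst_lt Cst_digit] := @undigitsP (ntypes x) (ntypes_gt0 x) (x + 1) (fun c => tau (cst c))
  (fun c _ => (tauP _).1).
have dom_tau u : in_dom x S (tau u).
  by have lt := (tauP u).1; split; rewrite // S_bit // bit_asbool; exists u.
exists S, Cst; split=> //; first by exists (tau u0).
  by move=> c cx; rewrite /cst_of Cst_digit //; case: (dom_tau (cst c)).
have Hhom : msat (fun _ => True) cst atom (fun _ => u0) A <->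
            msat (in_dom x S) (cst_of x Cst) atom_of (tau \o fun _ => u0) A.
  apply: (msat_hom _ _ _ _ (bounded_code A)) => [u _|v [v_lt]|p u px|c cx].
  - exact: dom_tau.
  - by rewrite S_bit // bit_asbool => -[u <-]; exists u.
  - by rewrite /atom_of (tauP u).2 ?addn1 // bit_asbool.
  by rewrite /cst_of Cst_digit // addn1.
apply/(msat_env _ _ _ sA (e := fun _ => tau u0)) => //.
exact: Hhom.1 Hsat.
Qed.

Lemma model_of_small_satisfiable A : sentence A ->
  small_satisfiable (Defs.code A) A -> classically_satisfiable A.
Proof.
move=> sA [S [Cst [_ _ [u Hu] Cst_dom Hsat]]]; set x := Defs.code A in Cst_dom Hsat.
pose U := {v | in_dom x S v}.
pose cstn c := if c <= x then cst_of x Cst c else u.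
have cst_dom c : in_dom x S (cstn c).
  rewrite /cstn; case: ifP => // cx.
  by split; [apply: digit_lt; exact: ntypes_gt0|rewrite Cst_dom ?addn1].
pose u0 : U := exist _ u Hu.
exists U, u0, (fun c => exist _ (cstn c) (cst_dom c)), (fun p v => atom_of p (sval v)).
apply/(msat_hom (h := sval) (dom2 := in_dom x S) (cst2 := cst_of x Cst) (atom2 := atom_of)
  _ _ _ _ (bounded_code A)) => [v _|v Hv|//|c cx|].
- exact: svalP.
- by exists (exist _ v Hv).
- by rewrite /= /cstn cx.
by apply/(msat_env _ _ _ sA (e := fun _ => 0)).
Qed.

(** * Truth tables of small models *)

Definition unpair (c : nat) : option (nat * nat) :=
  if pselect (exists ab : nat * nat, c = cpair ab.1 ab.2) is left H then Some (sval (cid H))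
  else None.

Lemma unpair_cpair a b : unpair (cpair a b) = Some (a, b).
Proof.
rewrite /unpair; case: pselect => [H|[]]; last by exists (a, b).
by case: (cid H) => -[a' b'] /= /cpair_inj[-> ->].
Qed.

Lemma unpairK c a b : unpair c = Some (a, b) -> c = cpair a b.
Proof. by rewrite /unpair; case: pselect => // H; case: (cid H) => -[a' b'] /= -> [<- <-]. Qed.

(* Every number decodes to some formula (junk to [FBot]), so that the truth table below can
   be made consistent at every number below the code, not only at codes. *)
Definition decode_step (rec : nat -> mform) (c : nat) : mform :=
  match unpair c with
  | Some (1, y) =>
      if unpair y is Some (p, s) then
        match unpair s with
        | Some (0, n) => FPred p (TVar n)
        | Some (1, n) => FPred p (TConst n)
        | _ => FBot
        end
      else FBot
  | Some (2, y) => if unpair y is Some (a, b) then FAnd (rec a) (rec b) else FBot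
  | Some (3, y) => if unpair y is Some (a, b) then FOr (rec a) (rec b) else FBot
  | Some (4, y) => if unpair y is Some (a, b) then FImp (rec a) (rec b) else FBot
  | Some (5, a) => FAll (rec a)
  | Some (6, a) => FEx (rec a)
  | _ => FBot
  end.

Lemma eq_decode_step r1 r2 c : (forall a, a < c -> r1 a = r2 a) ->
  decode_step r1 c = decode_step r2 c.
Proof.
move=> Hr; rewrite /decode_step; case Ec: (unpair c) => [[t y]|] //.
have lt_y a : a <= y -> 0 < t -> a < c.
  by move=> ay t0; rewrite (unpairK Ec); exact: leq_ltn_trans ay (ltn_cpairr _ t0).
case: t lt_y Ec => [|[|[|[|[|[|[|t]]]]]]] lt_y Ec //; try by rewrite Hr ?lt_y.
all: case Ey: (unpair y) => [[a b]|] //; rewrite (unpairK Ey) in lt_y.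
all: by rewrite !Hr ?lt_y ?leq_cpairl ?leq_cpairr.
Qed.

Fixpoint decode_iter (n c : nat) : mform :=
  if n is n'.+1 then decode_step (decode_iter n') c else FBot.

Definition decode (c : nat) : mform := decode_iter c.+1 c.

Lemma decode_iter_stable n m c : c < n <= m -> decode_iter m c = decode_iter n c.
Proof.
elim: n m c => [|n IH] [|m] c; rewrite ?ltn0 ?andbF // => /andP[cn nm].
change (decode_step (decode_iter m) c = decode_step (decode_iter n) c).
by apply: eq_decode_step => a ac; apply: IH; rewrite (leq_trans ac cn).
Qed.

Lemma decodeE c : decode c = decode_step decode c.
Proof.
change (decode_step (decode_iter c) c = decode_step decode c).
by apply: eq_decode_step => a ac; rewrite /decode (decode_iter_stable (n := a.+1)) ?ltnSn.
Qed.

Lemma decode_bot y : decode (cpair 0 y) = FBot.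
Proof. by rewrite decodeE /decode_step unpair_cpair. Qed.
Lemma decode_var p n : decode (cpair 1 (cpair p (cpair 0 n))) = FPred p (TVar n).
Proof. by rewrite decodeE /decode_step !unpair_cpair. Qed.
Lemma decode_const p n : decode (cpair 1 (cpair p (cpair 1 n))) = FPred p (TConst n).
Proof. by rewrite decodeE /decode_step !unpair_cpair. Qed.
Lemma decode_and a b : decode (cpair 2 (cpair a b)) = FAnd (decode a) (decode b).
Proof. by rewrite decodeE /decode_step !unpair_cpair. Qed.
Lemma decode_or a b : decode (cpair 3 (cpair a b)) = FOr (decode a) (decode b).
Proof. by rewrite decodeE /decode_step !unpair_cpair. Qed.
Lemma decode_imp a b : decode (cpair 4 (cpair a b)) = FImp (decode a) (decode b).
Proof. by rewrite decodeE /decode_step !unpair_cpair. Qed.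
Lemma decode_all a : decode (cpair 5 a) = FAll (decode a).
Proof. by rewrite decodeE /decode_step unpair_cpair. Qed.
Lemma decode_ex a : decode (cpair 6 a) = FEx (decode a).
Proof. by rewrite decodeE /decode_step unpair_cpair. Qed.

Lemma decode_code A : decode (Defs.code A) = A.
Proof.
elim: A => [|p [n|n]|A IA B IB|A IA B IB|A IA B IB|A IA|A IA] /=.
- exact: decode_bot.
- exact: decode_var.
- exact: decode_const.
- by rewrite decode_and IA IB.
- by rewrite decode_or IA IB.
- by rewrite decode_imp IA IB.
- by rewrite decode_all IA.
by rewrite decode_ex IA.
Qed.

Definition trunc (x : nat) (e : nat -> nat) (n : nat) : nat := if n < x then e n else 0.

Section TruncatedSemantics.
Variables (x : nat) (dom : nat -> Prop) (cst : nat -> nat) (atom : nat -> nat -> Prop).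

(* Environments are cut to their first [x] entries so that they have codes below [nenvs x]. *)
Fixpoint msat_trunc (e : nat -> nat) (A : mform) : Prop :=
  match A with
  | FBot => False
  | FPred p t => atom p (term_val cst e t)
  | FAnd A B => msat_trunc e A /\ msat_trunc e B
  | FOr A B => msat_trunc e A \/ msat_trunc e B
  | FImp A B => msat_trunc e A -> msat_trunc e B
  | FAll A => forall u, dom u -> msat_trunc (trunc x (scons u e)) A
  | FEx A => exists u, dom u /\ msat_trunc (trunc x (scons u e)) A
  end.

Lemma msat_truncE A k e : form_closed k A -> k + qdepth A <= x ->
  msat_trunc e A <-> msat dom cst atom e A.
Proof.
elim: A k e => [|p t|A IA B IB|A IA B IB|A IA B IB|A IA|A IA] k e //= Hc Hq;
  try by case/andP: Hc => /IA HA /IB HB;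
         rewrite HA ?HB // (leq_trans _ Hq) // leq_add2l (leq_maxl, leq_maxr).
all: have Hq' : k.+1 + qdepth A <= x by rewrite addSnnS.
all: have Hs u : msat_trunc (trunc x (scons u e)) A <-> msat dom cst atom (scons u e) A
  by rewrite (IA _ _ Hc Hq'); apply: (msat_env _ _ _ Hc) => n nk;
     rewrite /trunc (leq_trans nk) // (leq_trans _ Hq') // leq_addr.
- by split=> H u /H /Hs.
by split=> -[u [Hu /Hs H]]; exists u.
Qed.

End TruncatedSemantics.

Lemma env_of_push x u e : u < ntypes x ->
  env_of x ((u + ntypes x * e) %% nenvs x) = trunc x (scons u (env_of x e)).
Proof.
move=> ux; apply: funext => n; rewrite /trunc /env_of /nenvs.
case: ifP => nx; first rewrite digit_modX ?ntypes_gt0 //.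
  by case: n nx => [|n] _ /=; rewrite ?digit_cons0 ?digit_consS ?ntypes_gt0.
apply: digit_small.
apply: leq_trans (ltn_pmod _ (nenvs_gt0 x)) _.
by rewrite leq_pexp2l ?ntypes_gt0 // leqNgt nx.
Qed.

Definition in_table (x T c e : nat) : Prop := digit 2 T (c * nenvs x + e) = 1.

(* The Tarski conditions for a truth table [T] at the code [c] and environment code [e]. *)
Definition consistent_at (x S Cst T c e : nat) : Prop :=
  forall t y, c = cpair t y ->
  (t = 0 -> ~ in_table x T c e) /\
  (t = 1 -> forall p s, y = cpair p s -> forall k n, s = cpair k n ->
     (k = 0 -> (in_table x T c e <-> digit 2 (digit (ntypes x) e n) p = 1)) /\
     (k = 1 -> (in_table x T c e <-> digit 2 (digit (ntypes x) Cst n) p = 1))) /\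
  (t = 2 -> forall a b, y = cpair a b ->
     (in_table x T c e <-> in_table x T a e /\ in_table x T b e)) /\
  (t = 3 -> forall a b, y = cpair a b ->
     (in_table x T c e <-> in_table x T a e \/ in_table x T b e)) /\
  (t = 4 -> forall a b, y = cpair a b ->
     (in_table x T c e <-> (in_table x T a e -> in_table x T b e))) /\
  (t = 5 -> (in_table x T c e <-> forall u, u < ntypes x -> digit 2 S u = 1 ->
     in_table x T y ((u + ntypes x * e) %% nenvs x))) /\
  (t = 6 -> (in_table x T c e <-> exists u, u < ntypes x /\ digit 2 S u = 1 /\
     in_table x T y ((u + ntypes x * e) %% nenvs x))).

Section Tables.
Variables (x S Cst : nat).

Local Notation msatS := (msat_trunc x (in_dom x S) (cst_of x Cst) atom_of).

Lemma table_sound T :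
  (forall c, c < x + 1 -> forall e, e < nenvs x -> consistent_at x S Cst T c e) ->
  forall B, Defs.code B <= x -> forall e, e < nenvs x ->
  in_table x T (Defs.code B) e <-> msatS (env_of x e) B.
Proof.
move=> Hcons; have cons_at c e : c <= x -> e < nenvs x -> consistent_at x S Cst T c e.
  by move=> cx; apply: Hcons; rewrite addn1 ltnS.
elim=> [|p [n|n]|A IA B IB|A IA B IB|A IA B IB|A IA|A IA] Bx e ex;
  have [K0 [K1 [K2 [K3 [K4 [K5 K6]]]]]] := cons_at _ e Bx ex _ _ erefl.
- by split=> // /(K0 erefl).
- exact: (K1 erefl _ _ erefl _ _ erefl).1 erefl.
- exact: (K1 erefl _ _ erefl _ _ erefl).2 erefl.
- by rewrite (K2 erefl _ _ erefl) IA ?IB // (leq_trans _ Bx) ?leq_cpair2l ?leq_cpair2r.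
- by rewrite (K3 erefl _ _ erefl) IA ?IB // (leq_trans _ Bx) ?leq_cpair2l ?leq_cpair2r.
- by rewrite (K4 erefl _ _ erefl) IA ?IB // (leq_trans _ Bx) ?leq_cpair2l ?leq_cpair2r.
all: have E u : u < ntypes x -> in_table x T (Defs.code A) ((u + ntypes x * e) %% nenvs x) <->
                           msatS (trunc x (scons u (env_of x e))) A
       by move=> ux; rewrite IA ?env_of_push ?ltn_pmod ?nenvs_gt0 // (leq_trans _ Bx) ?leq_cpairr.
all: have {K5 K6} [_ [_ [_ [_ [_ [K5 K6]]]]]] := cons_at _ e Bx ex _ (Defs.code A) erefl.
- rewrite (K5 erefl); split=> H u; first by case=> ux Su; apply/(E _ ux); exact: H.
  by move=> ux Su; apply/(E _ ux); exact: H.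
rewrite (K6 erefl); split=> [[u [ux [Su /(E _ ux) Hu]]]|[u [[ux Su] /(E _ ux) Hu]]].
  by exists u; do !split.
by exists u.
Qed.

Definition table_entry (c e : nat) : Prop := msatS (env_of x e) (decode c).

Definition table : nat :=
  undigits 2 ((x + 1) * nenvs x) (fun i => `[< table_entry (i %/ nenvs x) (i %% nenvs x) >]).

Let tableP := @undigitsP 2 isT ((x + 1) * nenvs x)
  (fun i => `[< table_entry (i %/ nenvs x) (i %% nenvs x) >]) (fun _ _ => leq_b1 _).

Lemma table_lt : table < 2 ^ ((x + 1) * nenvs x).
Proof. exact: tableP.1. Qed.

Lemma in_tableE c e : c < x + 1 -> e < nenvs x -> in_table x table c e <-> table_entry c e.
Proof.
move=> cx ex; have lt : c * nenvs x + e < (x + 1) * nenvs x.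
  apply: (@leq_trans (c.+1 * nenvs x)); first by rewrite mulSn addnC ltn_add2r.
  by rewrite leq_pmul2r ?nenvs_gt0.
rewrite /in_table tableP.2 // divnMDl ?nenvs_gt0 // (divn_small ex) addn0.
by rewrite -modnDml modnMl add0n (modn_small ex) bit_asbool.
Qed.

Lemma table_consistent c e : c < x + 1 -> e < nenvs x -> consistent_at x S Cst table c e.
Proof.
move=> cx ex t y Ec; subst c.
have E a e' : a <= cpair t y -> e' < nenvs x -> in_table x table a e' <-> table_entry a e'.
  by move=> ac ex'; apply: in_tableE => //; exact: leq_ltn_trans ac cx.
have Epush u : u < ntypes x -> y <= cpair t y ->
    in_table x table y ((u + ntypes x * e) %% nenvs x) <->
    msatS (trunc x (scons u (env_of x e))) (decode y).
  by move=> ux yc; rewrite E ?ltn_pmod ?nenvs_gt0 // /table_entry env_of_push.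
split; first by move=> Et; subst t; rewrite E ?leqnn // /table_entry decode_bot.
split.
  move=> Et p s Ey k n Es; subst t y s.
  by split=> Ek; subst k; rewrite E ?leqnn // /table_entry ?decode_var ?decode_const.
split; first by move=> Et a b Ey; subst t y;
  rewrite !E ?leqnn ?leq_cpair2l ?leq_cpair2r // /table_entry decode_and.
split; first by move=> Et a b Ey; subst t y;
  rewrite !E ?leqnn ?leq_cpair2l ?leq_cpair2r // /table_entry decode_or.
split; first by move=> Et a b Ey; subst t y;
  rewrite !E ?leqnn ?leq_cpair2l ?leq_cpair2r // /table_entry decode_imp.
split=> Et; subst t; rewrite E ?leqnn // /table_entry ?decode_all ?decode_ex /=.
  split=> H u ux; first by move=> Su; apply/(Epush _ ux (leq_cpairr _ _)); apply: H.
  by case: ux => ux Su; apply/(Epush _ ux (leq_cpairr _ _))/H.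
split=> [[u [[ux Su] /(Epush _ ux (leq_cpairr _ _)) H]]|[u [ux [Su /(Epush _ ux) H]]]].
  by exists u.
by exists u; split=> //; apply: H; exact: leq_cpairr.
Qed.

End Tables.

(** * The arithmetized search for a small model *)

Definition search_spec (x : nat) : Prop :=
  exists S, S < 2 ^ ntypes x /\ exists Cst, Cst < ntypes x ^ (x + 1) /\
  exists T, T < 2 ^ ((x + 1) * nenvs x) /\
  (exists u, in_dom x S u) /\
  (forall c, c < x + 1 -> digit 2 S (cst_of x Cst c) = 1) /\
  (forall c, c < x + 1 -> forall e, e < nenvs x -> consistent_at x S Cst T c e) /\
  in_table x T x 0.

Lemma small_satisfiable_search A : sentence A ->
  small_satisfiable (Defs.code A) A <-> search_spec (Defs.code A).
Proof.
move=> sA; set x := Defs.code A.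
have env_of0 : env_of x 0 = fun _ => 0 by apply: funext => n; rewrite /env_of digit0.
have qA : 0 + qdepth A <= x by exact: qdepth_code.
split=> [[S [Cst [S_lt Cst_lt dom_ne Cst_dom Hsat]]]|].
  exists S; split=> //; exists Cst; split=> //.
  exists (table x S Cst); split; first exact: table_lt.
  do 3!split=> //; first by move=> c cx e ex; exact: table_consistent.
  rewrite in_tableE ?addn1 ?nenvs_gt0 // /table_entry decode_code.
  by rewrite (msat_truncE _ _ _ _ sA qA) env_of0.
move=> [S [S_lt [Cst [Cst_lt [T [_ [dom_ne [Cst_dom [Hcons HT]]]]]]]]].
exists S, Cst; split=> //.
have := (table_sound Hcons (leqnn x) (nenvs_gt0 x)).1 HT.
by rewrite (msat_truncE _ _ _ _ sA qA) env_of0.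
Qed.

(* Variables of the formulas below are referred to by de Bruijn levels: [lvl d l] is the
   variable bound at level [l], seen under [d] binders.  Levels 0 to 3 hold [x, S, Cst, T]. *)
Definition lvl (d l : nat) : aexp := AVar (d - l.+1).

Definition ADig (b X i : aexp) : aexp := AMod (ADiv X (AExp b i)) b.
Definition BBit (X i : aexp) : bfm := BEq (ADig (ACst 2) X i) (ACst 1).
Definition BIff (f g : bfm) : bfm := BAnd (BImp f g) (BImp g f).

Definition ANtypes (d : nat) : aexp := AExp (ACst 2) (AAdd (lvl d 0) (ACst 1)).
Definition ANenvs (d : nat) : aexp := AExp (ANtypes d) (lvl d 0).
Definition BTab (d : nat) (c e : aexp) : bfm := BBit (lvl d 3) (AAdd (AMul c (ANenvs d)) e).

(* Inside [consistent_formula], the levels 4 to 7 hold [c, e] and the tag and body of [c]. *)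
Definition tab_ce (d : nat) : bfm := BTab d (lvl d 4) (lvl d 5).
Definition tag_is (k : nat) : bfm := BEq (lvl 8 6) (ACst k).

Definition consistent_formula : bfm :=
  BSplit (lvl 6 4)
  (BAnd (BImp (tag_is 0) (BNot (tab_ce 8)))
  (BAnd (BImp (tag_is 1) (BSplit (lvl 8 7) (BSplit (lvl 10 9)
     (BAnd (BImp (BEq (lvl 12 10) (ACst 0))
              (BIff (tab_ce 12) (BBit (ADig (ANtypes 12) (lvl 12 5) (lvl 12 11)) (lvl 12 8))))
           (BImp (BEq (lvl 12 10) (ACst 1))
              (BIff (tab_ce 12) (BBit (ADig (ANtypes 12) (lvl 12 2) (lvl 12 11)) (lvl 12 8))))))))
  (BAnd (BImp (tag_is 2) (BSplit (lvl 8 7)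
     (BIff (tab_ce 10) (BAnd (BTab 10 (lvl 10 8) (lvl 10 5)) (BTab 10 (lvl 10 9) (lvl 10 5))))))
  (BAnd (BImp (tag_is 3) (BSplit (lvl 8 7)
     (BIff (tab_ce 10) (BOr (BTab 10 (lvl 10 8) (lvl 10 5)) (BTab 10 (lvl 10 9) (lvl 10 5))))))
  (BAnd (BImp (tag_is 4) (BSplit (lvl 8 7)
     (BIff (tab_ce 10) (BImp (BTab 10 (lvl 10 8) (lvl 10 5)) (BTab 10 (lvl 10 9) (lvl 10 5))))))
  (BAnd (BImp (tag_is 5) (BIff (tab_ce 8) (BAll (ANtypes 8) (BImp (BBit (lvl 9 1) (lvl 9 8))
     (BTab 9 (lvl 9 7) (AMod (AAdd (lvl 9 8) (AMul (ANtypes 9) (lvl 9 5))) (ANenvs 9)))))))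
  (BImp (tag_is 6) (BIff (tab_ce 8) (BEx (ANtypes 8) (BAnd (BBit (lvl 9 1) (lvl 9 8))
     (BTab 9 (lvl 9 7) (AMod (AAdd (lvl 9 8) (AMul (ANtypes 9) (lvl 9 5))) (ANenvs 9))))))))))))).

Definition search_formula : bfm :=
  BEx (AExp (ACst 2) (ANtypes 1))
  (BEx (AExp (ANtypes 2) (AAdd (lvl 2 0) (ACst 1)))
  (BEx (AExp (ACst 2) (AMul (AAdd (lvl 3 0) (ACst 1)) (ANenvs 3)))
  (BAnd (BEx (ANtypes 4) (BBit (lvl 5 1) (lvl 5 4)))
  (BAnd (BAll (AAdd (lvl 4 0) (ACst 1)) (BBit (lvl 5 1) (ADig (ANtypes 5) (lvl 5 2) (lvl 5 4))))
  (BAnd (BAll (AAdd (lvl 4 0) (ACst 1)) (BAll (ANenvs 5) consistent_formula))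
        (BTab 4 (lvl 4 0) (ACst 0))))))).

Lemma holds_search_formula x : holds [:: x] search_formula = search_spec x.
Proof. by []. Qed.

Lemma search_formula_wf : bwf 1 search_formula.
Proof. by []. Qed.

Theorem mainTheorem7 (R : realType) (V : set R) :
  godel_set V -> zero_isolated V ->
  decidable_on_sentences (one_satisfiable V).
Proof.
move=> godelV zeroV; exists (compB 1 search_formula) => A sA.
have E : one_satisfiable V A <-> holds [:: Defs.code A] search_formula.
  rewrite holds_search_formula one_satisfiable_classical // -small_satisfiable_search //.
  by split; [exact: small_satisfiable_of_model|exact: model_of_small_satisfiable].
have := reval_compB (env := [:: Defs.code A]) search_formula_wf.
rewrite -(asbool_equiv_eq E).
by case: asboolP => HP H; split.
Qed.
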